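(* Let $M$ be a Hausdorff space. Then $\mathcal{Q}_x(\mathcal{T}(M))\neq\emptyset$ for every $x\in M$, and $\bigcup_{x\in M}\mathcal{Q}_x(\mathcal{T}(M))$ is dense in $\mathcal{Q}(\mathcal{T}(M))$.
   Context: $\mathcal{T}(M)$ is the lattice of open subsets of $M$. A quasipoint of $\mathcal{T}(M)$ is a maximal dual ideal, i.e. a maximal nonempty family $\mathfrak{B}$ of open sets with $\emptyset\notin\mathfrak{B}$, upward closed and closed under finite intersections. $\mathcal{Q}(\mathcal{T}(M))$ is the set of quasipoints with the topology having base $\mathcal{Q}_U(\mathcal{T}(M))=\{\mathfrak{B}\mid U\in\mathfrak{B}\}$, $U\in\mathcal{T}(M)$. A quasipoint $\mathfrak{B}$ is a quasipoint over $x\in M$ if $x\in\bigcap_{U\in\mathfrak{B}}\overline{U}$; $\mathcal{Q}_x(\mathcal{T}(M))$ denotes the set of quasipoints over $x$. *)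

From HB Require Import structures.
From mathcomp Require Import all_boot all_order all_algebra.
From mathcomp Require Import all_classical all_reals all_analysis.
Set Implicit Arguments. Unset Strict Implicit. Unset Printing Implicit Defensive.
Local Open Scope classical_set_scope.

Section Quasipoints.
Variable M : topologicalType.

Definition dual_ideal (B : set (set M)) : Prop :=
  [/\ B !=set0,
      (forall U, B U -> open U),
      ~ B set0,
      (forall U V, B U -> open V -> U `<=` V -> B V) &
      (forall U V, B U -> B V -> B (U `&` V))].

Definition quasipoint (B : set (set M)) : Prop :=
  dual_ideal B /\ (forall B', dual_ideal B' -> B `<=` B' -> B' = B).

Definition Qspace : set (set (set M)) := quasipoint.

Definition QU (U : set M) : set (set (set M)) := [set B | quasipoint B /\ B U].

(* Open subsets of Q(T(M)) in the topology with base { Q_U | U open }: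
   exactly the unions of basic open sets. *)
Definition Qopen (S : set (set (set M))) : Prop :=
  S `<=` Qspace /\
  (forall B, S B -> exists U, [/\ open U, QU U B & QU U `<=` S]).

Definition Qdense (D : set (set (set M))) : Prop :=
  D `<=` Qspace /\ (forall S, Qopen S -> S !=set0 -> (S `&` D) !=set0).

Definition Qx (x : M) : set (set (set M)) :=
  [set B | quasipoint B /\ (forall U, B U -> closure U x)].

End Quasipoints.

From HB Require Import structures.
From mathcomp Require Import all_boot all_order all_algebra.
From mathcomp Require Import all_classical all_reals all_analysis.
Local Open Scope classical_set_scope.

(* The open neighbourhoods of a point x form a dual ideal; by Zorn's lemma it
   extends to a quasipoint, which lies over x because each of its members
   meets every open neighbourhood of x.  For density, a nonempty basic open
   set Q_U contains the quasipoint extending the neighbourhoods of any point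
   of U. *)

Section QuasipointExistence.
Context {M : topologicalType}.

Lemma dual_ideal_open_nbhs (x : M) : dual_ideal (open_nbhs x).
Proof.
split.
- by exists setT; split => //; exact: openT.
- by move=> U [].
- by move=> [].
- by move=> U V [_ Ux] oV UV; split => //; exact: UV.
- by move=> U V [oU Ux] [oV Vx]; split; [exact: openI|].
Qed.

Lemma dual_ideal_mem_neq0 {B : set (set M)} {U : set M} :
  dual_ideal B -> B U -> U !=set0.
Proof. by move=> [_ _ nB0 _ _] BU; apply/set0P/eqP => U0; apply: nB0; rewrite -U0. Qed.

Lemma dual_ideal_bigcup (I : Type) (D : set I) (G : I -> set (set M)) :
  D !=set0 -> (forall i, D i -> dual_ideal (G i)) ->
  (forall i j, D i -> D j -> G i `<=` G j \/ G j `<=` G i) ->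
  dual_ideal (\bigcup_(i in D) G i).
Proof.
move=> [i0 Di0] dG Gtot; split.
- by have [[U GU] _ _ _ _] := dG i0 Di0; exists U, i0.
- by move=> U [i Di GiU]; have [_ + _ _ _] := dG i Di; apply.
- by move=> [i Di Gi0]; have [_ _ + _ _] := dG i Di; apply.
- move=> U V [i Di GiU] oV UV; exists i => //.
  by have [_ _ _ upG _] := dG i Di; exact: upG oV UV.
- move=> U V [i Di GiU] [j Dj GjV].
  have [Gij|Gji] := Gtot i j Di Dj.
  + by exists j => //; have [_ _ _ _ +] := dG j Dj; apply; [exact: Gij|].
  + by exists i => //; have [_ _ _ _ +] := dG i Di; apply; [|exact: Gji].
Qed.

(* Zorn is applied to the families C with [B `|` C] a dual ideal, so that the
   empty chain, whose union is set0, is admissible. *)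
Lemma dual_ideal_sub_quasipoint {B : set (set M)} :
  dual_ideal B -> exists2 Q, quasipoint Q & B `<=` Q.
Proof.
move=> dB; pose P := [set C : set (set M) | dual_ideal (B `|` C)].
have [A [PA maxA]] : exists A, P A /\ forall C, A `<` C -> ~ P C.
  apply: Zorn_bigcup => F FP Ftot.
  have [->|F0] := eqVneq F set0; first by rewrite /P /= bigcup_set0 setU0.
  rewrite /P /= -bigcupUr; last exact/set0P.
  apply: dual_ideal_bigcup => [|//|C D FC FD]; first exact/set0P.
  by have [CD|DC] := Ftot C D FC FD; [left|right]; exact: setUS.
exists (B `|` A) => //; split => // Q dQ sQ.
have AQ : A `<=` Q by move=> U AU; apply: sQ; right.
have PQ : P Q by rewrite /P /= (setUidr (subset_trans (@subsetUl _ B A) sQ)).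
have QA : Q `<=` A by apply: contrapT => nQA; exact: maxA Q (conj AQ nQA) PQ.
by apply/seteqP; split => // U /QA; right.
Qed.

Lemma quasipoint_over_nbhs (x : M) (Q : set (set M)) :
  quasipoint Q -> open_nbhs x `<=` Q -> Qx x Q.
Proof.
move=> qQ nbhsQ; split => // U QU W; rewrite nbhsE => -[V xV VW].
have [dQ _] := qQ; have [_ _ _ _ capQ] := dQ.
have [y [Uy Vy]] := dual_ideal_mem_neq0 dQ (capQ _ _ QU (nbhsQ _ xV)).
by exists y; split => //; exact: VW.
Qed.

Lemma Qx_sup_nbhs (x : M) : exists2 Q, Qx x Q & open_nbhs x `<=` Q.
Proof.
have [Q qQ nbhsQ] := dual_ideal_sub_quasipoint (dual_ideal_open_nbhs x).
by exists Q => //; exact: quasipoint_over_nbhs.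
Qed.

End QuasipointExistence.

Theorem proposition2p41 (M : topologicalType) (HM : hausdorff_space M) :
  (forall x : M, Qx x !=set0) /\ Qdense (\bigcup_(x in [set: M]) Qx x).
Proof.
split; first by move=> x; have [Q QxQ _] := Qx_sup_nbhs x; exists Q.
split; first by move=> Q [x _ []].
move=> S [_ Sopen] [Q SQ].
have [U [oU [[dQ _] QU] US]] := Sopen Q SQ.
have [x Ux] := dual_ideal_mem_neq0 dQ QU.
have [Q' Qx'Q' nbhsQ'] := Qx_sup_nbhs x.
have [qQ' _] := Qx'Q'.
exists Q'; split; last by exists x.
exact: US (conj qQ' (nbhsQ' U (conj oU Ux))).
Qed.
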